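(* Let $n\ge 2$, $F_2=\langle a,b\rangle$ free, $T=[a,b]$, and $R=R_{\mathrm{Heis}_n}$ the kernel of $F_2\to H_n$, $a\mapsto\alpha$, $b\mapsto\beta$. Then for all integers $i,j\ge 0$ the elements $T^n$ and $T^{-n}[a^ib^j,T]$ lie in $R$, and in the abelianization $R^{ab}=R/[R,R]$ (written additively, with the $H_n$-action described in the context) one has $$T^n=a^n-(a^n)^{\beta}-\sum_{k=0}^{n-2}\sum_{i=0}^{n-2-k}[a,T]^{\tau^k\alpha^i},$$ $$T^{-n}=b^n-(b^n)^{\alpha}-\sum_{k=0}^{n-2}\sum_{j=0}^{n-2-k}[b,T^{-1}]^{\tau^{-k}\beta^j},$$ $$[a^ib^j,T]=[b,T]^{\alpha^i\sum_{\lambda=0}^{j-1}\beta^\lambda}+[a,T]^{\sum_{\lambda=0}^{i-1}\alpha^\lambda}.$$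
   Context: $H_n$ is the group of $3\times3$ upper unitriangular matrices over $\mathbb{Z}/n\mathbb{Z}$, generated by $\alpha$ (entry $1$ at position $(1,2)$) and $\beta$ (entry $1$ at position $(2,3)$); $\tau=[\alpha,\beta]$. Commutator $[x,y]=xyx^{-1}y^{-1}$. Elements of $R$ are identified with their classes in $R^{ab}$. Since $R$ is normal in $F_2$ with $F_2/R\cong H_n$, $H_n$ acts on $R^{ab}$: for $x\in R^{ab}$ and $g\in H_n$, $x^g$ is the class of $\tilde g x\tilde g^{-1}$ for any lift $\tilde g\in F_2$ of $g$ (so $x^{gh}=(x^h)^g$); this is extended $\mathbb{Z}$-linearly to $\mathbb{Z}[H_n]$ by $x^{\sum c_g g}=\sum c_g x^g$. Here $\alpha,\beta,\tau$ are the images of $a,b,T$. *)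

From mathcomp Require Import all_boot all_algebra.
Set Implicit Arguments. Unset Strict Implicit. Unset Printing Implicit Defensive.
Import GRing.Theory.
Local Open Scope ring_scope.

(* A letter is (generator, inverted?): generator false = a, true = b. *)
Definition letter := (bool * bool)%type.
Definition word := seq letter.

Definition la : letter := (false, false).
Definition lb : letter := (true, false).
Definition linv (l : letter) : letter := (l.1, ~~ l.2).

Definition wa : word := [:: la].
Definition wb : word := [:: lb].

(* group operations on words (multiplication is concatenation) *)
Definition winv (w : word) : word := rev (map linv w).
Definition wexp (w : word) (k : nat) : word := flatten (nseq k w).

Definition wreduce (w : word) : word :=
  foldr (fun l acc => match acc with
                      | l' :: acc' => if l' == linv l then acc' else l :: acc
                      | [::] => [:: l]
                      end) [::] w.

Definition feq (x y : word) : Prop := wreduce x = wreduce y.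

Definition comm (x y : word) : word := x ++ y ++ winv x ++ winv y.

Definition wT : word := comm wa wb.

(* alpha = I + E_{12}, beta = I + E_{23} (0-indexed: (0,1) and (1,2)). *)
Definition lmat (n : nat) (l : letter) : 'M['Z_n]_3 :=
  let E := if l.1 then delta_mx 1 2%:R else delta_mx 0 1 in
  if l.2 then 1%:M - E else 1%:M + E.

Definition heis_eval (n : nat) (w : word) : 'M['Z_n]_3 :=
  foldr (fun l M => lmat n l *m M) 1%:M w.

Definition inR (n : nat) (w : word) : Prop := heis_eval n w = 1%:M.

(* [R,R]: elements of F_2 equal to a product of commutators of elements of R
   (this set is the subgroup generated by such commutators, since
   [x,y]^-1 = [y,x]). *)
Inductive inRR (n : nat) : word -> Prop :=
| RR_nil : inRR n [::]
| RR_cons x y z : inR n x -> inR n y -> inRR n z -> inRR n (comm x y ++ z)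
| RR_feq w w' : inRR n w -> feq w w' -> inRR n w'.

Definition abeq (n : nat) (x y : word) : Prop :=
  [/\ inR n x, inR n y & inRR n (x ++ winv y)].

(* x^g where u is a lift of g in F_2: the class of u x u^-1 *)
Definition act (x u : word) : word := u ++ x ++ winv u.
(* sums / differences in R^ab are represented by products / inverses *)
Definition wsum (s : seq word) : word := flatten s.
Definition wsub (x y : word) : word := x ++ winv y.

(* Under the
   coordinates (x, y, z) of H_n, T maps to the central element (0, 0, 1), so
   every commutator [w, T^{±1}] lies in R, and T^n lies in R because n = 0 in
   Z/nZ.  Modulo [R,R] elements of R commute, and conjugation is the action
   of H_n.  The identity for [a^i b^j, T] then follows from
   [xy, z] = [y, z]^x [x, z] and [x^k, z] = [x, z]^(1 + x + ... + x^(k-1)).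
   For T^n one writes [x^m, y] = Q_m S^m with S = [x, y] and Q_m in R; the
   recursion Q_(m+1) = [x^m, S] + Q_m^S unfolds to the triangular double sum,
   and T^n = [a^n, b] - Q_n. *)
From mathcomp Require Import all_boot all_algebra.
From mathcomp Require Import ring.
From Stdlib Require Import Setoid Morphisms.
Set Implicit Arguments. Unset Strict Implicit. Unset Printing Implicit Defensive.
Import GRing.Theory.

Definition wstep (l : letter) (acc : word) : word :=
  match acc with
  | l' :: acc' => if l' == linv l then acc' else l :: acc
  | [::] => [:: l]
  end.

Fixpoint reduced (w : word) : bool :=
  match w with
  | l :: ((l' :: _) as w') => (l' != linv l) && reduced w'
  | _ => true
  end.

Lemma linvK : involutive linv.
Proof. by case=> ? []. Qed.

Lemma reduced_wstep l r : reduced r -> reduced (wstep l r).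
Proof.
case: r => [|l' r] //=; case: eqP => [_|/eqP ne] /=.
  by case: r => // ? ? /andP[].
by move=> ->; rewrite ne.
Qed.

Lemma reduced_foldr_wstep acc x : reduced acc -> reduced (foldr wstep acc x).
Proof. by move=> h; elim: x => //= l x IH; apply: reduced_wstep. Qed.

Lemma reduced_wreduce w : reduced (wreduce w).
Proof. exact: reduced_foldr_wstep. Qed.

Lemma wstepK l s : reduced s -> wstep l (wstep (linv l) s) = s.
Proof.
case: s => [|l1 s] /=; first by rewrite eqxx.
rewrite linvK; case: eqP => [->|ne].
  by case: s => [|l2 s] //= /andP[ne2 _]; rewrite (negbTE ne2).
by move=> _ /=; case: eqP.
Qed.

Lemma foldr_wstep acc r l : reduced acc ->
  foldr wstep acc (wstep l r) = wstep l (foldr wstep acc r).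
Proof.
move=> ha; case: r => [|l' r] //=; case: eqP => [->|] //=.
by rewrite wstepK // reduced_foldr_wstep.
Qed.

Lemma foldr_wreduce acc x : reduced acc ->
  foldr wstep acc x = foldr wstep acc (wreduce x).
Proof. by move=> ha; elim: x => //= l x IH; rewrite IH -foldr_wstep. Qed.

Lemma wreduce_cat x y : wreduce (x ++ y) = foldr wstep (wreduce y) x.
Proof. by rewrite /wreduce foldr_cat. Qed.

#[export] Instance feq_equiv : Equivalence feq.
Proof. by split; rewrite /feq; [|move=> x y ->|move=> x y z -> ->]. Qed.

#[export] Instance cat_feq : Proper (feq ==> feq ==> feq) (@cat letter).
Proof.
move=> x x' ex y y' ey; rewrite /feq !wreduce_cat ey.
by rewrite foldr_wreduce ?reduced_wreduce // ex -foldr_wreduce ?reduced_wreduce.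
Qed.

Lemma winv_cat u v : winv (u ++ v) = winv v ++ winv u.
Proof. by rewrite /winv map_cat rev_cat. Qed.

Lemma winvK : involutive winv.
Proof. by move=> u; rewrite /winv map_rev revK -map_comp map_id_in // => l _ /=; rewrite linvK. Qed.

Lemma winv_cons l u : winv (l :: u) = winv u ++ [:: linv l].
Proof. by rewrite /winv /= rev_cons cats1. Qed.

Lemma feq_catK u v : feq (u ++ winv u ++ v) v.
Proof.
elim: u v => [|l u IH] v //=.
rewrite winv_cons -catA /feq /= -/(wstep _ _).
have := IH (linv l :: v); rewrite /feq /= => ->.
by rewrite -/(wstep _ _) wstepK // reduced_wreduce.
Qed.

Lemma feq_catVK u v : feq (winv u ++ u ++ v) v.
Proof. by have := feq_catK (winv u) v; rewrite winvK. Qed.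

Lemma feq_catV u : feq (u ++ winv u) [::].
Proof. by have := feq_catK u [::]; rewrite cats0. Qed.

Lemma feq_winv x y : feq x y -> feq (winv x) (winv y).
Proof.
move=> e; have e' : feq (winv x ++ x ++ winv y) (winv x ++ y ++ winv y).
  by apply: cat_feq; [reflexivity | apply: cat_feq].
by rewrite -[winv x]cats0 -(feq_catV y) -e' feq_catVK.
Qed.

Lemma winv_comm x y : winv (comm x y) = comm y x.
Proof. by rewrite /comm !winv_cat !winvK !catA. Qed.

Lemma wexpS w k : wexp w k.+1 = w ++ wexp w k.
Proof. by []. Qed.

Lemma wexpSr w k : wexp w k.+1 = wexp w k ++ w.
Proof.
elim: k => [|k IH]; first by rewrite /wexp /= cats0.
by rewrite wexpS {1}IH catA.
Qed.

Lemma act_cat x u v : act x (u ++ v) = act (act x v) u.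
Proof. by rewrite /act !winv_cat -!catA. Qed.

Lemma act_feq_cat x y u : feq (act (x ++ y) u) (act x u ++ act y u).
Proof. by rewrite /act -!catA feq_catVK. Qed.

Lemma act_feq_nil u : feq (act [::] u) [::].
Proof. exact: feq_catV. Qed.

Lemma act_feq_wsum (f : nat -> word) s u :
  feq (act (wsum [seq f i | i <- s]) u) (wsum [seq act (f i) u | i <- s]).
Proof.
elim: s => [|i s IH]; first exact: act_feq_nil.
by rewrite [wsum _]/= act_feq_cat IH.
Qed.

#[export] Instance act_feq : Proper (feq ==> eq ==> feq) act.
Proof. by move=> x x' e u _ <-; rewrite /act e. Qed.

Lemma comm_cat_feq x y z : feq (comm (x ++ y) z) (act (comm y z) x ++ comm x z).
Proof. by rewrite /comm /act !winv_cat -!catA !feq_catVK. Qed.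

Lemma comm_expS_feq x z k :
  feq (comm (wexp x k.+1) z) (act (comm x z) (wexp x k) ++ comm (wexp x k) z).
Proof. by rewrite wexpSr comm_cat_feq. Qed.

Lemma wsum_iotaS (f : nat -> word) k :
  wsum [seq f l | l <- iota 0 k.+1] = wsum [seq f l | l <- iota 0 k] ++ f k.
Proof. by rewrite -addn1 iotaD map_cat /wsum flatten_cat /= cats0. Qed.

Local Open Scope ring_scope.

Definition heis (n : nat) := ('Z_n * 'Z_n * 'Z_n)%type.

Definition heis_mx n (p : heis n) : 'M['Z_n]_3 :=
  \matrix_(i, j) (if (i == j :> nat) then 1 else
                  if ((i : nat) == 0%N) && ((j : nat) == 1%N) then p.1.1 else
                  if ((i : nat) == 1%N) && ((j : nat) == 2%N) then p.1.2 else
                  if ((i : nat) == 0%N) && ((j : nat) == 2%N) then p.2 else 0).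

Definition hmul n (p q : heis n) : heis n :=
  (p.1.1 + q.1.1, p.1.2 + q.1.2, p.2 + q.2 + p.1.1 * q.1.2).
Definition hinv n (p : heis n) : heis n := (- p.1.1, - p.1.2, - p.2 + p.1.1 * p.1.2).
Definition h1 n : heis n := (0, 0, 0).

Definition hletter n (l : letter) : heis n :=
  match l with
  | (false, false) => (1, 0, 0)
  | (false, true) => (-1, 0, 0)
  | (true, false) => (0, 1, 0)
  | (true, true) => (0, -1, 0)
  end.

Definition hword n (w : word) : heis n := foldr (fun l p => hmul (hletter n l) p) (h1 n) w.

Section HeisenbergCoordinates.
Variable n : nat.
Implicit Types p q r : heis n.

Lemma heis_mxM p q : heis_mx p *m heis_mx q = heis_mx (hmul p q).
Proof.
case: p => [[x y] z]; case: q => [[x' y'] z'].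
apply/matrixP => i j; rewrite !mxE !big_ord_recr big_ord0 /= !mxE.
by case: i => [[|[|[|i]]] Hi] //; case: j => [[|[|[|j]]] Hj] //=; ring.
Qed.

Lemma heis_mx1 : heis_mx (h1 n) = 1%:M.
Proof.
apply/matrixP => i j; rewrite !mxE.
by case: i => [[|[|[|i]]] Hi] //; case: j => [[|[|[|j]]] Hj].
Qed.

Lemma heis_mx_inj : injective (@heis_mx n).
Proof.
case=> [[x y] z] [[x' y'] z'] e.
have entry (i j : 'I_3) := congr1 (fun M : 'M_3 => M i j) e.
move: (entry 0 1) (entry 1 2%:R) (entry 0 2%:R); rewrite !mxE /=.
by move=> -> -> ->.
Qed.

Lemma lmatE l : lmat n l = heis_mx (hletter n l).
Proof.
apply/matrixP => i j; rewrite /lmat !mxE.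
case: l => [[] []] /=; rewrite !mxE;
by case: i => [[|[|[|i]]] Hi] //; case: j => [[|[|[|j]]] Hj] //=; ring.
Qed.

Lemma heis_evalE w : heis_eval n w = heis_mx (hword n w).
Proof. by elim: w => [|l w IH] /=; rewrite ?heis_mx1 // IH lmatE heis_mxM. Qed.

Lemma inRE w : inR n w <-> hword n w = h1 n.
Proof.
rewrite /inR heis_evalE -heis_mx1; split; first exact: heis_mx_inj.
by move=> ->.
Qed.

Lemma hmulA p q r : hmul p (hmul q r) = hmul (hmul p q) r.
Proof.
case: p => [[x y] z]; case: q => [[x' y'] z']; case: r => [[x'' y''] z''].
by rewrite /hmul /=; congr (_, _, _); ring.
Qed.

Lemma hmul1 p : hmul (h1 n) p = p.
Proof. by case: p => [[x y] z]; rewrite /hmul /=; congr (_, _, _); ring. Qed.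

Lemma hmulp1 p : hmul p (h1 n) = p.
Proof. by case: p => [[x y] z]; rewrite /hmul /=; congr (_, _, _); ring. Qed.

Lemma hmulV p : hmul p (hinv p) = h1 n.
Proof. by case: p => [[x y] z]; rewrite /hmul /hinv /h1 /=; congr (_, _, _); ring. Qed.

Lemma hinvM p q : hinv (hmul p q) = hmul (hinv q) (hinv p).
Proof.
case: p => [[x y] z]; case: q => [[x' y'] z'].
by rewrite /hmul /hinv /=; congr (_, _, _); ring.
Qed.

Lemma hletter_linv l : hletter n (linv l) = hinv (hletter n l).
Proof. by case: l => [[] []]; rewrite /hinv /=; congr (_, _, _); ring. Qed.

Lemma hword_cat u v : hword n (u ++ v) = hmul (hword n u) (hword n v).
Proof. by elim: u => [|l u IH] /=; rewrite ?hmul1 // IH hmulA. Qed.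

Lemma hword_winv u : hword n (winv u) = hinv (hword n u).
Proof.
elim: u => [|l u IH]; first by rewrite /hinv /h1 /=; congr (_, _, _); ring.
by rewrite winv_cons hword_cat IH hinvM [hword n [:: _]]/= hmulp1 -hletter_linv.
Qed.

Lemma hword_wstep l s : hword n (wstep l s) = hmul (hletter n l) (hword n s).
Proof.
case: s => [|l' s] //; rewrite /wstep; case: eqP => [->|] //.
by rewrite [hword n (_ :: s)]/hword -/(hword n s) hmulA hletter_linv hmulV hmul1.
Qed.

Lemma feq_hword x y : feq x y -> hword n x = hword n y.
Proof.
have red w : hword n (wreduce w) = hword n w.
  by elim: w => //= l w IH; rewrite -/(wstep _ _) hword_wstep IH.
by move=> e; rewrite -red e red.
Qed.

Lemma inR_cat x y : inR n x -> inR n y -> inR n (x ++ y).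
Proof. by move=> /inRE hx /inRE hy; apply/inRE; rewrite hword_cat hx hy hmul1. Qed.

Lemma inR_winv x : inR n x -> inR n (winv x).
Proof.
by move=> /inRE hx; apply/inRE; rewrite hword_winv hx /hinv /h1 /=; congr (_, _, _); ring.
Qed.

Lemma inR_act x u : inR n x -> inR n (act x u).
Proof. by move/inRE=> h; apply/inRE; rewrite /act !hword_cat h hmul1 hword_winv hmulV. Qed.

Lemma inR_comm_central x z c : hword n z = (0, 0, c) -> inR n (comm x z).
Proof.
move=> hz; apply/inRE; rewrite /comm !hword_cat !hword_winv hz.
by case: (hword n x) => [[a b] d]; rewrite /hmul /hinv /h1 /=; congr (_, _, _); ring.
Qed.

Lemma hword_wexp_central w c k : hword n w = (0, 0, c) -> hword n (wexp w k) = (0, 0, c *+ k).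
Proof.
move=> hw; elim: k => [|k IH]; first by rewrite /= mulr0n.
by rewrite wexpS hword_cat hw IH /hmul /=; congr (_, _, _); rewrite ?mulrS; ring.
Qed.

Lemma inR_wexp_central w c : (1 < n)%N -> hword n w = (0, 0, c) -> inR n (wexp w n).
Proof.
move=> n_gt1 hw; apply/inRE.
by rewrite (hword_wexp_central n hw) -mulr_natr pchar_Zp // mulr0.
Qed.

Lemma hword_wT : hword n wT = (0, 0, 1).
Proof. by rewrite /hword /= /hmul /h1 /=; congr (_, _, _); ring. Qed.

Lemma hword_winv_wT : hword n (winv wT) = (0, 0, -1).
Proof. by rewrite hword_winv hword_wT /hinv /=; congr (_, _, _); ring. Qed.

End HeisenbergCoordinates.

Section Abelianization.
Variable n : nat.

Definition eqmodRR (x y : word) : Prop := inRR n (x ++ winv y).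

Lemma inRR_inR w : inRR n w -> inR n w.
Proof.
elim=> [|x y z /inRE hx /inRE hy _ /inRE hz|w1 w2 _ /inRE h e]; apply/inRE => //.
  rewrite /comm !hword_cat !hword_winv hx hy hz /hinv /h1 /hmul /=.
  by congr (_, _, _); ring.
by rewrite -(feq_hword n e).
Qed.

Lemma inRR_feq0 x : feq x [::] -> inRR n x.
Proof. by move=> e; apply: (RR_feq (RR_nil n)); symmetry. Qed.

Lemma inRR_comm x y : inR n x -> inR n y -> inRR n (comm x y).
Proof. by move=> hx hy; rewrite -[comm x y]cats0; apply: RR_cons => //; apply: RR_nil. Qed.

Lemma inRR_cat x y : inRR n x -> inRR n y -> inRR n (x ++ y).
Proof.
move=> hx; elim: hx y => [|x1 y1 z h1 h2 _ IH|w1 w2 _ IH e] y hy //.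
  by rewrite -catA; apply: RR_cons => //; apply: IH.
by apply: (RR_feq (IH y hy)); rewrite e.
Qed.

Lemma inRR_winv x : inRR n x -> inRR n (winv x).
Proof.
elim=> [|x1 y1 z h1 h2 _ IH|w1 w2 _ IH e]; first exact: RR_nil.
  by rewrite winv_cat winv_comm; apply: inRR_cat => //; apply: inRR_comm.
by apply: (RR_feq IH); apply: feq_winv.
Qed.

Lemma inRR_act x u : inRR n x -> inRR n (act x u).
Proof.
elim=> [|x1 y1 z h1 h2 _ IH|w1 w2 _ IH e]; first exact/inRR_feq0/act_feq_nil.
  apply: (RR_feq (RR_cons (inR_act u h1) (inR_act u h2) IH)).
  by rewrite /comm /act !winv_cat !winvK -!catA !feq_catVK.
by apply: (RR_feq IH); rewrite e.
Qed.

#[export] Instance eqmodRR_equiv : Equivalence eqmodRR.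
Proof.
split.
- by move=> x; apply: inRR_feq0; rewrite feq_catV.
- by move=> x y /inRR_winv; rewrite winv_cat winvK.
- move=> x y z /inRR_cat h /h{}h; apply: (RR_feq h).
  by rewrite -catA feq_catVK.
Qed.

#[export] Instance cat_eqmodRR : Proper (eqmodRR ==> eqmodRR ==> eqmodRR) (@cat letter).
Proof.
move=> x x' ex y y' ey; apply: (RR_feq (inRR_cat (inRR_act x ey) ex)).
by rewrite /act winv_cat -!catA feq_catVK.
Qed.

#[export] Instance feq_sub_eqmodRR : subrelation feq eqmodRR.
Proof. by move=> x y e; apply: inRR_feq0; rewrite e feq_catV. Qed.

#[export] Instance act_eqmodRR : Proper (eqmodRR ==> eq ==> eqmodRR) act.
Proof. by move=> x x' e u _ <-; rewrite /act e; reflexivity. Qed.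

Lemma eqmodRR_catC x y : inR n x -> inR n y -> eqmodRR (x ++ y) (y ++ x).
Proof. by move=> hx hy; rewrite /eqmodRR winv_cat -!catA; apply: inRR_comm. Qed.

Lemma eqmodRR_inR x y : eqmodRR x y -> inR n x -> inR n y.
Proof.
move=> /inRR_inR /inRE h /inRE hx; apply/inRE.
move: h; rewrite hword_cat hx hmul1 hword_winv => h.
by rewrite -[hword n y]hmulp1 -h hmulV.
Qed.

Lemma abeq_eqmodRR x y : inR n x -> eqmodRR x y -> abeq n x y.
Proof. by move=> hx e; split=> //; apply: eqmodRR_inR hx. Qed.

End Abelianization.

Section CentralCommutators.
Variables (n : nat) (z : word).
Hypothesis z_central : forall x, inR n (comm x z).

Lemma eqmodRR_comm_wexp x k :
  eqmodRR n (comm (wexp x k) z) (wsum [seq act (comm x z) (wexp x l) | l <- iota 0 k]).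
Proof.
elim: k => [|k IH]; first by rewrite /comm /= feq_catV; reflexivity.
have hsum := eqmodRR_inR IH (z_central _).
rewrite comm_expS_feq IH eqmodRR_catC ?wsum_iotaS //; last exact: inR_act.
reflexivity.
Qed.

Lemma abeq_comm_wexp_cat x y i j :
  abeq n (comm (wexp x i ++ wexp y j) z)
    (wsum [seq act (comm y z) (wexp x i ++ wexp y l) | l <- iota 0 j]
     ++ wsum [seq act (comm x z) (wexp x l) | l <- iota 0 i]).
Proof.
apply: abeq_eqmodRR => //.
rewrite comm_cat_feq eqmodRR_comm_wexp eqmodRR_comm_wexp act_feq_wsum.
under eq_map do rewrite -act_cat.
reflexivity.
Qed.

(* The Q_m of the identity [x^m, y] = Q_m z^m for z = [x, y] (comm_wexp_defectE). *)
Fixpoint comm_wexp_defect (x : word) (m : nat) : word :=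
  if m is m'.+1 then comm (wexp x m') z ++ act (comm_wexp_defect x m') z else [::].

Definition triangle_sum (x : word) (p : nat) : word :=
  wsum [seq act (comm x z) (wexp z k ++ wexp x i) | k <- iota 0 p, i <- iota 0 (p - k)].

Lemma comm_wexp_defectE x y m : comm x y = z ->
  feq (comm (wexp x m) y) (comm_wexp_defect x m ++ wexp z m).
Proof.
move=> zE; elim: m => [|m IH]; first by rewrite /comm /= feq_catV.
rewrite comm_expS_feq zE IH /= wexpS /act /comm -!catA !feq_catVK.
reflexivity.
Qed.

Lemma inR_comm_wexp_defect x m : inR n (comm_wexp_defect x m).
Proof.
elim: m => [|m IH] /=; first exact/inRE.
by apply: inR_cat; [exact: z_central | exact: inR_act].
Qed.

Lemma act_triangle_shift x q r m :
  feq (act (wsum [seq act (comm x z) (wexp z k ++ wexp x i)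
                 | k <- iota m r, i <- iota 0 (q - k)]) z)
      (wsum [seq act (comm x z) (wexp z k ++ wexp x i)
            | k <- iota m.+1 r, i <- iota 0 (q.+1 - k)]).
Proof.
elim: r m => [|r IH] m; first exact: act_feq_nil.
rewrite [iota m r.+1]/= [iota m.+1 r.+1]/= !allpairs_cons /wsum !flatten_cat -!/(wsum _).
rewrite act_feq_cat IH act_feq_wsum subSS.
by under eq_map do rewrite -act_cat catA.
Qed.

Lemma eqmodRR_comm_wexp_defect x p :
  eqmodRR n (comm_wexp_defect x p.+1) (triangle_sum x p).
Proof.
elim: p => [|p IH]; first by rewrite /triangle_sum /= /comm /= feq_catV act_feq_nil; reflexivity.
have -> : comm_wexp_defect x p.+2 =
          comm (wexp x p.+1) z ++ act (comm_wexp_defect x p.+1) z by [].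
rewrite IH eqmodRR_comm_wexp /triangle_sum act_triangle_shift.
by rewrite [iota 0 p.+1]/= allpairs_cons /wsum flatten_cat subn0; reflexivity.
Qed.

Lemma abeq_wexp_comm x y : (0 < n)%N -> comm x y = z -> inR n (wexp z n) ->
  abeq n (wexp z n)
    (wsub (wsub (wexp x n) (act (wexp x n) y)) (triangle_sum x n.-1)).
Proof.
move=> n_gt0 zE hzn; apply: abeq_eqmodRR => //.
have -> : wsub (wexp x n) (act (wexp x n) y) = comm (wexp x n) y.
  by rewrite /wsub /act /comm !winv_cat winvK -!catA.
have hQ := eqmodRR_comm_wexp_defect x n.-1; rewrite prednK // in hQ.
have hD := eqmodRR_inR hQ (inR_comm_wexp_defect x n).
symmetry; rewrite /wsub (comm_wexp_defectE _ zE) hQ eqmodRR_catC.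
- by rewrite feq_catVK; reflexivity.
- exact: inR_cat.
- exact: inR_winv.
Qed.

End CentralCommutators.

Theorem lemma2p11 (n : nat) (hn : (2 <= n)%N) (i j : nat) :
  [/\ inR n (wexp wT n),
      inR n (wexp (winv wT) n ++ comm (wexp wa i ++ wexp wb j) wT),
      (* T^n = a^n - (a^n)^beta - sum_{k=0}^{n-2} sum_{i=0}^{n-2-k} [a,T]^{tau^k alpha^i} *)
      abeq n (wexp wT n)
        (wsub (wsub (wexp wa n) (act (wexp wa n) wb))
              (wsum [seq act (comm wa wT) (wexp wT k ++ wexp wa i')
                    | k <- iota 0 n.-1, i' <- iota 0 (n.-1 - k)])),
      (* T^-n = b^n - (b^n)^alpha - sum_{k=0}^{n-2} sum_{j=0}^{n-2-k} [b,T^-1]^{tau^-k beta^j} *)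
      abeq n (wexp (winv wT) n)
        (wsub (wsub (wexp wb n) (act (wexp wb n) wa))
              (wsum [seq act (comm wb (winv wT)) (wexp (winv wT) k ++ wexp wb j')
                    | k <- iota 0 n.-1, j' <- iota 0 (n.-1 - k)]))
    & (* [a^i b^j, T] = [b,T]^{alpha^i sum_{l<j} beta^l} + [a,T]^{sum_{l<i} alpha^l} *)
      abeq n (comm (wexp wa i ++ wexp wb j) wT)
        (wsum [seq act (comm wb wT) (wexp wa i ++ wexp wb l) | l <- iota 0 j]
         ++ wsum [seq act (comm wa wT) (wexp wa l) | l <- iota 0 i])].
Proof.
have n_gt0 : (0 < n)%N by apply: leq_trans hn.
have T_central x := inR_comm_central x (hword_wT n).
have Ti_central x := inR_comm_central x (hword_winv_wT n).
have Tn := inR_wexp_central hn (hword_wT n).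
have Tin := inR_wexp_central hn (hword_winv_wT n).
split.
- exact: Tn.
- exact: inR_cat Tin (T_central _).
- exact: abeq_wexp_comm.
- by apply: abeq_wexp_comm; rewrite // -winv_comm.
- exact: abeq_comm_wexp_cat.
Qed.
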